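(* Let $D$ be a strongly connected orientation of $G^\circ$ (the graph $G$ with its bridges deleted) and let $v^D\in H$ be the unique flow with $2\langle v^D,x^C\rangle=q(x^C)$ for every circuit $C\subseteq D$. Then $2\,q(v^D)=\sum_{e\in D}v^D_e$.
   Context: $G=(V,E)$ is a finite connected graph, possibly with parallel edges and loops; $\mathbb E$ is the set of oriented edges ($e$ and its reverse $\bar e$). Real $1$-chains $x:\mathbb E\to\mathbb R$ satisfy $x_{\bar e}=-x_e$; $\langle x,y\rangle=\sum_{e\in E}x_ey_e$, $q(x)=\langle x,x\rangle$. A flow satisfies $\sum_{e\text{ with tail }v}x_e=0$ at every vertex $v$; $H$ is the space of real flows. A circuit is an orientation of a cycle as a directed cycle; $x^C_e=1$ if $e\in C$, $-1$ if $\bar e\in C$, $0$ otherwise. An orientation (a set of oriented edges with exactly one of $e,\bar e$ per edge) is strongly connected if on each connected component any two vertices are joined by directed paths in both directions. *)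

From HB Require Import structures.
From mathcomp Require Import all_boot all_order all_algebra.
Set Implicit Arguments. Unset Strict Implicit. Unset Printing Implicit Defensive.
Import Order.TTheory GRing.Theory Num.Theory.
Local Open Scope ring_scope.

(* A finite multigraph (loops and parallel edges allowed): vertex type V,
   edge type E, each edge e given with a reference orientation tl e -> hd e.
   Oriented edges are pairs (e, b) : E * bool; (e,false) is the reference
   orientation of e and (e,true) its reverse \bar e. *)

Section Graph.
Variables (V E : finType) (tl hd : E -> V).

Definition otail (o : E * bool) : V := if o.2 then hd o.1 else tl o.1.
Definition ohead (o : E * bool) : V := if o.2 then tl o.1 else hd o.1.

Definition adjS (S : pred E) : rel V :=
  fun u w => [exists e, S e && (((tl e == u) && (hd e == w)) ||
                                ((tl e == w) && (hd e == u)))].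

Definition connected_graph : Prop := forall u w, connect (adjS predT) u w.

Definition bridge (e : E) : bool :=
  ~~ connect (adjS (predC1 e)) (tl e) (hd e).

Definition nonbridge : pred E := fun e => ~~ bridge e.

Definition orientation_of_Gcirc (D : {set E * bool}) : Prop :=
  forall e, if bridge e then ((e, false) \notin D) && ((e, true) \notin D)
            else ((e, false) \in D) != ((e, true) \in D).

Definition arcD (D : {set E * bool}) : rel V :=
  fun u w => [exists o in D, (otail o == u) && (ohead o == w)].

(* strongly connected: on each connected component (of G°, whose edge set
   is that of D) any two vertices are joined by a directed path of D *)
Definition strongly_connected (D : {set E * bool}) : Prop :=
  forall u w, connect (adjS nonbridge) u w -> connect (arcD D) u w.

Definition is_circuit (c : seq (E * bool)) : Prop :=
  [/\ c != [::], cycle (fun a b => ohead a == otail b) c,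
      uniq (map fst c) & uniq (map otail c)].

Variable R : realFieldType.

(* real 1-chains are represented by their values on reference orientations;
   the value on an oriented edge is given by ochain *)
Definition ochain (x : E -> R) (o : E * bool) : R :=
  if o.2 then - x o.1 else x o.1.

Definition is_flow (x : E -> R) : Prop :=
  forall v : V, \sum_(o : E * bool | otail o == v) ochain x o = 0.

Definition inner (x y : E -> R) : R := \sum_(e : E) x e * y e.
Definition qf (x : E -> R) : R := inner x x.

Definition circ_chain (c : seq (E * bool)) (e : E) : R :=
  if (e, false) \in c then 1 else if (e, true) \in c then -1 else 0.

End Graph.

From Pilot Require Import Defs.
From HB Require Import structures.
From mathcomp Require Import all_boot all_order all_algebra.
Set Implicit Arguments. Unset Strict Implicit. Unset Printing Implicit Defensive.
Import Order.TTheory GRing.Theory Num.Theory.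
Local Open Scope ring_scope.

(* With [1_D] ([orient_chain]) the chain that is [1] on every arc of [D], the claim reads
   [<2v - 1_D, v> = 0], and since [<1_D, x^C> = q(x^C)] for every circuit [C] of [D]
   the hypothesis says that [w = 2v - 1_D] is orthogonal to all circuits of [D].
   A flow that is nonnegative on [D] (and hence vanishes on bridges) is a
   nonnegative combination of circuits of [D]: follow positive arcs until a circuit
   closes, subtract its minimum and induct on the support. Strong connectivity gives
   closed walks through every arc, hence a flow that is at least [1] on all of [D];
   adding a large multiple of it makes [v] nonnegative on [D], so [<w, v> = 0]. *)

Section Flows.
Variables (V E : finType) (tl hd : E -> V) (R : realFieldType).
Local Notation otail := (otail tl hd).
Local Notation ohead := (Defs.ohead tl hd).
Local Notation is_flow := (@is_flow V E tl hd R).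

Definition outflow (P : pred V) (x : E -> R) : R :=
  \sum_e ((P (tl e))%:R - (P (hd e))%:R) * x e.

Lemma outflowE (P : pred V) (x : E -> R) :
  \sum_(o | P (otail o)) ochain x o = outflow P x.
Proof.
rewrite big_mkcond -(pair_big predT predT (fun e b =>
  if P (otail (e, b)) then ochain x (e, b) else 0)) /=.
apply: eq_bigr => e _; rewrite big_bool /otail /ochain /=.
by case: (P (tl e)); case: (P (hd e));
  rewrite /= !(subrr, subr0, sub0r, mul0r, mul1r, mulN1r, addr0, add0r, addNr).
Qed.

Lemma is_flowP (x : E -> R) : is_flow x <-> forall w, outflow (pred1 w) x = 0.
Proof. by split=> Fx w; have := Fx w; rewrite -outflowE. Qed.

Lemma outflow_comb (P : pred V) (x y : E -> R) (a : R) :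
  outflow P (fun e => x e + a * y e) = outflow P x + a * outflow P y.
Proof.
rewrite /outflow mulr_sumr -big_split; apply: eq_bigr => e _.
by rewrite mulrDr mulrCA.
Qed.

Lemma outflow_sum (I : Type) (s : seq I) (f : I -> E -> R) (P : pred V) :
  outflow P (fun e => \sum_(i <- s) f i e) = \sum_(i <- s) outflow P (f i).
Proof. by rewrite /outflow exchange_big; apply: eq_bigr => e _; rewrite mulr_sumr. Qed.

Lemma is_flow_comb (x y : E -> R) (a : R) :
  is_flow x -> is_flow y -> is_flow (fun e => x e + a * y e).
Proof.
move=> /is_flowP Fx /is_flowP Fy; apply/is_flowP => w.
by rewrite outflow_comb Fx Fy mulr0 addr0.
Qed.

Lemma ochain_comb (x y : E -> R) (a : R) (o : E * bool) :
  ochain (fun e => x e + a * y e) o = ochain x o + a * ochain y o.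
Proof. by rewrite /ochain; case: o.2 => //; rewrite opprD mulrN. Qed.

Lemma inner_comb (w x y : E -> R) (a : R) :
  inner w (fun e => x e + a * y e) = inner w x + a * inner w y.
Proof.
rewrite /inner mulr_sumr -big_split; apply: eq_bigr => e _.
by rewrite mulrDr mulrCA.
Qed.

Lemma innerZBl (x y z : E -> R) (a : R) :
  inner (fun e => a * x e - y e) z = a * inner x z - inner y z.
Proof.
rewrite /inner mulr_sumr -sumrB; apply: eq_bigr => e _.
by rewrite mulrBl mulrA.
Qed.

(* The component of [tl e] in [G - e] is a vertex set out of which only [e] leaves. *)
Lemma flow_bridge (x : E -> R) (e : E) : is_flow x -> bridge tl hd e -> x e = 0.
Proof.
move=> Fx be; pose S : pred V := connect (adjS tl hd (predC1 e)) (tl e).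
have : outflow S x = 0.
  rewrite -outflowE (partition_big otail S) //=.
  apply: big1 => w Sw; rewrite -[RHS](Fx w); apply: eq_bigl => o.
  by rewrite andb_idl // => /eqP->.
have S_edge f : f != e -> S (tl f) = S (hd f).
  move=> fe; have adj u u' : (tl f == u) && (hd f == u') || (tl f == u') && (hd f == u) ->
      adjS tl hd (predC1 e) u u' by move=> uu'; apply/existsP; exists f; rewrite /= fe.
  apply/idP/idP => H; apply: connect_trans H (connect1 (adj _ _ _)).
    by rewrite !eqxx.
  by rewrite !eqxx orbT.
rewrite /outflow (bigD1 e) //= big1 => [|f /S_edge ->]; last by rewrite subrr mul0r.
by rewrite /S connect0 (negbTE be) subr0 mul1r addr0.
Qed.

Definition arc_chain (a : E * bool) (e : E) : R :=
  if e == a.1 then (if a.2 then -1 else 1) else 0.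

Lemma arc_chainE (a : E * bool) (e : E) :
  arc_chain a e = (a == (e, false))%:R - (a == (e, true))%:R.
Proof.
case: a => f b; rewrite /arc_chain !xpair_eqE /=.
by case: (eqVneq e f) => _; case: b; rewrite /= ?subr0 ?sub0r ?subrr.
Qed.

Lemma sumr_eq_count (T : eqType) (s : seq T) (x : T) :
  \sum_(a <- s) (a == x)%:R = (count_mem x s)%:R :> R.
Proof.
rewrite -sum1_count natr_sum [RHS]big_mkcond.
by apply: eq_bigr => a _ /=; case: (a == x).
Qed.

Definition walk_chain (s : seq (E * bool)) (e : E) : R := \sum_(a <- s) arc_chain a e.

Lemma outflow_arc_chain (P : pred V) (a : E * bool) :
  outflow P (arc_chain a) = (P (otail a))%:R - (P (ohead a))%:R.
Proof.
rewrite /outflow (bigD1 a.1) //= big1 => [|e /negbTE ea]; last first.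
  by rewrite /arc_chain ea mulr0.
rewrite /arc_chain eqxx addr0 /otail /Defs.ohead; case: a.2; last by rewrite mulr1.
by rewrite mulrN1 opprB.
Qed.

Lemma walk_chain_flow (s : seq (E * bool)) :
  perm_eq (map otail s) (map ohead s) -> is_flow (walk_chain s).
Proof.
move=> bal; apply/is_flowP => w; rewrite outflow_sum.
under eq_bigr do rewrite outflow_arc_chain.
rewrite sumrB -(big_map otail predT (fun u => (u == w)%:R))
  -(big_map ohead predT (fun u => (u == w)%:R)).
by rewrite (perm_big _ bal) subrr.
Qed.

Definition arc_succ (a b : E * bool) : bool := ohead a == otail b.

Lemma arc_succ_path (a : E * bool) (s : seq (E * bool)) :
  path arc_succ a s -> map ohead (belast a s) = map otail s.
Proof. by elim: s a => [|b s IH] a //= /andP[/eqP-> /IH->]. Qed.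

Lemma cycle_balanced (c : seq (E * bool)) :
  cycle arc_succ c -> perm_eq (map otail c) (map ohead c).
Proof.
case: c => [|a c] //= /arc_succ_path; rewrite belast_rcons map_rcons /= => ->.
by rewrite perm_sym perm_rcons.
Qed.

Lemma arcD_path (D : {set E * bool}) (u : V) (p : seq V) : path (arcD tl hd D) u p ->
  exists s, [/\ {subset s <= D}, map otail s = belast u p & map ohead s = p].
Proof.
elim: p u => [|w p IH] u /=; first by exists [::].
case/andP=> /existsP[o /and3P[oD /eqP ou /eqP ow]] /IH[s [sD s1 s2]].
exists (o :: s); split=> /=; last by rewrite ow s2.
  by move=> a; rewrite inE => /predU1P[->|/sD].
by rewrite ou s1.
Qed.

Lemma closed_walk_through (D : {set E * bool}) (o : E * bool) : o \in D ->
  connect (arcD tl hd D) (ohead o) (otail o) ->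
  exists s, [/\ {subset s <= D}, o \in s & perm_eq (map otail s) (map ohead s)].
Proof.
move=> oD /connectP[p /arcD_path[s [sD s1 s2]] last_p].
exists (o :: s); split; last 1 first.
- by rewrite /= s1 s2 (lastI (ohead o) p) -last_p perm_sym perm_rcons.
- by move=> a; rewrite inE => /predU1P[->|/sD].
- exact: mem_head.
Qed.

(* Following, from each vertex, a fixed chosen outgoing [P]-arc eventually cycles. *)
Lemma exists_arc_cycle (P : pred (E * bool)) (a0 : E * bool) : P a0 ->
  (forall a, P a -> exists2 b, P b & otail b = ohead a) ->
  exists c, [/\ c != [::], cycle arc_succ c, uniq (map otail c) & all P c].
Proof.
move=> Pa0 succP.
pose nxt w := odflt a0 [pick b | P b && (otail b == w)].
pose g w := ohead (nxt w).
pose W := [pred w | [exists b, P b && (otail b == w)]].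
have nxtW w : W w -> P (nxt w) /\ otail (nxt w) = w.
  rewrite /W /= /nxt; case: pickP => [b /andP[Pb /eqP ->]|H] //=.
  by case/existsP=> b; rewrite H.
have gW w : W w -> W (g w).
  move=> /nxtW[P1 _]; have [b Pb Hb] := succP _ P1.
  by apply/existsP; exists b; rewrite Pb Hb /g eqxx.
pose x0 := otail a0.
have iterW n : W (iter n g x0).
  by elim: n => [|n IH] /=; [apply/existsP; exists a0; rewrite Pa0 eqxx | apply: gW].
have /trajectP[i lti Hi] : looping g x0 (order g x0) by exact: looping_order.
set y := iter i g x0.
have cycle_y : fcycle g (orbit g y).
  apply/(@orbitPcycle _ g y 3 0); exists (order g x0 - i).-1.
  by rewrite prednK ?subn_gt0 // /y -iterD subnK ?Hi // ltnW.
have allW : all W (orbit g y).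
  by apply/allP => z /trajectP[j _ ->]; rewrite /y -iterD.
exists (map nxt (orbit g y)); split.
- by rewrite -size_eq0 size_map -lt0n size_traject order_gt0.
- rewrite cycle_map; apply: (sub_in_cycle (P := W)) cycle_y => //.
  move=> a b aW bW /eqP <-; rewrite /relpre /arc_succ /=.
  by have [_ ->] := nxtW _ (gW _ aW).
- rewrite -map_comp (eq_in_map _ id _).1 ?map_id ?orbit_uniq //.
  by move=> z /(allP allW) /nxtW[_ H]; rewrite /= H.
- by rewrite all_map; apply/allP => z /(allP allW) /nxtW[].
Qed.

Definition rev_arc (o : E * bool) : E * bool := (o.1, ~~ o.2).

Lemma ochain_rev_arc (x : E -> R) (o : E * bool) : ochain x (rev_arc o) = - ochain x o.
Proof. by case: o => e [] /=; rewrite /ochain /= ?opprK. Qed.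

Lemma otail_rev_arc (o : E * bool) : otail (rev_arc o) = ohead o.
Proof. by case: o => e []. Qed.

Variable D : {set E * bool}.
Hypothesis orientD : orientation_of_Gcirc tl hd D.

Lemma inD_nonbridge (o : E * bool) : o \in D -> ~~ bridge tl hd o.1.
Proof.
case: o => e b oD; have := orientD e; case: (bridge tl hd e) => //=.
by case/andP; case: b oD => /= ->.
Qed.

Lemma rev_arc_notin (o : E * bool) : o \in D -> rev_arc o \notin D.
Proof.
move=> oD; have := orientD o.1; rewrite (negbTE (inD_nonbridge oD)).
by case: o oD => e [] /= ->; [case: ((e, false) \in D) | case: ((e, true) \in D)].
Qed.

Lemma nonbridge_inD (o : E * bool) : ~~ bridge tl hd o.1 -> (o \in D) || (rev_arc o \in D).
Proof.
move=> nb; have := orientD o.1; rewrite (negbTE nb).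
by case: o {nb} => e [] /=; case: ((e, false) \in D); case: ((e, true) \in D).
Qed.

Lemma fst_inj_inD : {in D &, injective fst}.
Proof.
move=> [e a] [f b] aD bD /= ef; subst f; case: (eqVneq a b) => [-> //|ab].
have : rev_arc (e, a) = (e, b) by rewrite /rev_arc /=; case: a b ab {aD bD} => [] [].
by move=> rev_eq; move: (rev_arc_notin aD); rewrite rev_eq bD.
Qed.

Definition orient_chain (e : E) : R :=
  ((e, false) \in D)%:R - ((e, true) \in D)%:R.

Lemma sum_ochain_inD (x : E -> R) : \sum_(o in D) ochain x o = inner orient_chain x.
Proof.
rewrite big_mkcond (eq_bigr (fun o => if (o.1, o.2) \in D then ochain x (o.1, o.2) else 0));
  last by case.
rewrite -(pair_big predT predT (fun e b => if (e, b) \in D then ochain x (e, b) else 0)).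
apply: eq_bigr => e _; rewrite big_bool /orient_chain /ochain /=.
by case: ((e, true) \in D); case: ((e, false) \in D);
  rewrite /= !(subrr, subr0, sub0r, mul0r, mul1r, mulN1r, addr0, add0r, addNr).
Qed.

Lemma ochain_arc_chain (a o : E * bool) : a \in D -> o \in D ->
  ochain (arc_chain a) o = (a == o)%:R.
Proof.
move=> aD oD; rewrite /ochain /arc_chain.
case: (eqVneq o.1 a.1) => [oa | /negPf oa].
  by rewrite (fst_inj_inD aD oD (esym oa)) eqxx; case: o.2 => //; rewrite opprK.
have -> : (a == o) = false by apply: contraFF oa => /eqP->.
by case: o.2; rewrite ?oppr0.
Qed.

Lemma ochain_walk_chain (s : seq (E * bool)) (o : E * bool) :
  {subset s <= D} -> o \in D -> ochain (walk_chain s) o = (count_mem o s)%:R.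
Proof.
move=> sD oD; have -> : ochain (walk_chain s) o = \sum_(a <- s) ochain (arc_chain a) o.
  by rewrite /ochain /walk_chain; case: o.2 => //; rewrite sumrN.
by rewrite -sumr_eq_count; apply: eq_big_seq => a /sD aD; apply: ochain_arc_chain.
Qed.

Lemma circ_chain_walk_chain (c : seq (E * bool)) : {subset c <= D} -> uniq c ->
  circ_chain R c =1 walk_chain c.
Proof.
move=> cD uc e; rewrite /walk_chain.
under eq_bigr do rewrite arc_chainE.
rewrite sumrB !sumr_eq_count !count_uniq_mem // /circ_chain.
case: ifP => [ec | _]; last by case: ifP => _; rewrite ?subrr ?sub0r.
have /negbTE -> : (e, true) \notin c by apply: contra (rev_arc_notin (cD _ ec)) => /cD.
by rewrite subr0.
Qed.

Lemma circ_chain_flow (c : seq (E * bool)) : {subset c <= D} -> uniq c ->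
  cycle arc_succ c -> is_flow (circ_chain R c).
Proof.
move=> cD uc /cycle_balanced/walk_chain_flow Fc w.
by under eq_bigr do rewrite /ochain circ_chain_walk_chain //; exact: Fc.
Qed.

Lemma ochain_circ_chain (c : seq (E * bool)) (o : E * bool) :
  {subset c <= D} -> uniq c -> o \in D -> ochain (circ_chain R c) o = (o \in c)%:R.
Proof.
move=> cD uc oD; rewrite -count_uniq_mem // -ochain_walk_chain //.
by rewrite /ochain circ_chain_walk_chain.
Qed.

Lemma inner_orient_circ_chain (c : seq (E * bool)) :
  {subset c <= D} -> inner orient_chain (circ_chain R c) = qf (circ_chain R c).
Proof.
move=> cD; apply: eq_bigr => e _; rewrite /orient_chain /circ_chain.
case: ifP => [/cD eD | _].
  by rewrite eD (negbTE (rev_arc_notin eD)) subr0.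
case: ifP => [/cD eD | _]; last by rewrite !mulr0.
by rewrite eD (negbTE (rev_arc_notin eD)) sub0r mulrNN.
Qed.

Lemma positive_successor (x : E -> R) (a : E * bool) :
  is_flow x -> {in D, forall o, 0 <= ochain x o} -> a \in D -> 0 < ochain x a ->
  exists2 b, (b \in D) && (0 < ochain x b) & otail b = ohead a.
Proof.
move=> Fx x_ge0 aD xa_gt0; set w := ohead a.
have [/existsP[b /and3P[bD xb_gt0 /eqP bw]] | no_succ] :=
  boolP [exists b, [&& b \in D, 0 < ochain x b & otail b == w]].
  by exists b; rewrite ?bD.
have out_le0 o : otail o = w -> ochain x o <= 0.
  move=> ow; rewrite leNgt; apply/negP => xo_gt0.
  have [bo | /nonbridge_inD /orP[oD | roD]] := boolP (bridge tl hd o.1).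
  - by move: xo_gt0; rewrite /ochain (flow_bridge Fx bo); case: o.2; rewrite ?oppr0 ltxx.
  - by move/negP: no_succ; apply; apply/existsP; exists o; rewrite oD xo_gt0 ow eqxx.
  - by have := x_ge0 _ roD; rewrite ochain_rev_arc oppr_ge0 leNgt xo_gt0.
(* The reverse of [a] leaves [w] with a negative value, so [x] cannot balance at [w]. *)
suff : \sum_(o | otail o == w) ochain x o < 0 by rewrite Fx ltxx.
rewrite (bigD1 (rev_arc a)) ?otail_rev_arc //= -[X in _ < X](addr0 0).
rewrite ltr_leD ?ochain_rev_arc ?oppr_lt0 //.
by apply: sumr_le0 => o /andP[/eqP/out_le0].
Qed.

Lemma exists_positive_circuit (x : E -> R) (a0 : E * bool) :
  is_flow x -> {in D, forall o, 0 <= ochain x o} -> a0 \in D -> 0 < ochain x a0 ->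
  exists c, [/\ is_circuit tl hd c, {subset c <= D} & {in c, forall a, 0 < ochain x a}].
Proof.
move=> Fx x_ge0 a0D xa0_gt0.
pose P := [pred a | (a \in D) && (0 < ochain x a)].
have Pa0 : P a0 by rewrite /= a0D.
have succP a : P a -> exists2 b, P b & otail b = ohead a.
  by move=> /andP[aD xa_gt0]; apply: positive_successor.
have [c [c_nil c_cycle c_uniq /allP c_pos]] := exists_arc_cycle Pa0 succP.
have cD : {subset c <= D} by move=> a /c_pos /andP[].
exists c; split=> // [|a /c_pos /andP[] //].
split=> //; rewrite map_inj_in_uniq; first exact: map_uniq c_uniq.
by move=> a b /cD aD /cD bD; apply: fst_inj_inD.
Qed.

Definition supportD (x : E -> R) : {set E * bool} := [set o in D | ochain x o != 0].

(* Subtracting the smallest value of [x] on a positive circuit of [D] keeps [x]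
   nonnegative on [D] and kills it on at least one arc. *)
Lemma peel_circuit (x : E -> R) (a0 : E * bool) :
  is_flow x -> {in D, forall o, 0 <= ochain x o} -> a0 \in supportD x ->
  exists c m, let y e := x e + m * circ_chain R c e in
    [/\ is_circuit tl hd c, {subset c <= D}, is_flow y,
        {in D, forall o, 0 <= ochain y o} & (#|supportD y| < #|supportD x|)%N].
Proof.
move=> Fx x_ge0; rewrite inE => /andP[a0D xa0_neq0].
have xa0_gt0 : 0 < ochain x a0 by rewrite lt0r xa0_neq0 x_ge0.
have [c [c_circ cD c_pos]] := exists_positive_circuit Fx x_ge0 a0D xa0_gt0.
have [c_nil c_cycle _ _] := c_circ.
have c_uniq : uniq c by case: c_circ => _ _ /map_uniq.
have [a1 a1c] : exists a1, a1 \in c.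
  by case: (c) c_nil => [|a s] // _; exists a; apply: mem_head.
case: (arg_minP (ochain x) a1c) => {a1 a1c} a1 a1c min_a1.
set m := ochain x a1.
exists c, (- m) => y.
have y_on_D o : o \in D -> ochain y o = ochain x o - m * (o \in c)%:R.
  by move=> oD; rewrite /y ochain_comb ochain_circ_chain // mulNr.
split=> //.
- exact/is_flow_comb/circ_chain_flow.
- move=> o oD; rewrite y_on_D //; case: (boolP (o \in c)) => oc /=.
    by rewrite mulr1 subr_ge0 min_a1.
  by rewrite mulr0 subr0 x_ge0.
apply: proper_card; apply/properP; split.
  apply/subsetP => o; rewrite !inE => /andP[oD]; rewrite oD y_on_D //=.
  by case: (boolP (o \in c)) => oc; rewrite /= ?mulr0 ?subr0 // => _; rewrite gt_eqF ?c_pos.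
exists a1; first by rewrite inE (cD _ a1c) gt_eqF ?c_pos.
by rewrite inE negb_and y_on_D ?(cD _ a1c) // (a1c : a1 \in c) mulr1 subrr eqxx orbT.
Qed.

Lemma flow_supportD0 (x : E -> R) : is_flow x -> supportD x = set0 -> x =1 (fun=> 0).
Proof.
move=> Fx supp0 e; have [/(flow_bridge Fx) // | nb] := boolP (bridge tl hd e).
have x_on_D o : o \in D -> ochain x o = 0.
  move=> oD; apply/eqP/negbNE; apply: contra_eqN supp0 => xo.
  by apply/set0Pn; exists o; rewrite inE oD.
case/orP: (nonbridge_inD (o := (e, false)) nb) => /x_on_D /eqP.
  by move/eqP.
by rewrite /ochain oppr_eq0 => /eqP.
Qed.

Lemma orthogonal_circuits_nonneg_flow (w x : E -> R) :
  (forall c, is_circuit tl hd c -> {subset c <= D} -> inner w (circ_chain R c) = 0) ->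
  is_flow x -> {in D, forall o, 0 <= ochain x o} -> inner w x = 0.
Proof.
move=> w_circ; move: {2}#|supportD x|.+1 (ltnSn #|supportD x|) => n.
elim: n x => // n IH x supp_lt Fx x_ge0.
have [/(flow_supportD0 Fx) x0 | /set0Pn[a0 a0_supp]] := eqVneq (supportD x) set0.
  by rewrite /inner big1 // => e _; rewrite x0 mulr0.
have [c [m [c_circ cD Fy y_ge0 supp_y]]] := peel_circuit Fx x_ge0 a0_supp.
have := IH _ (leq_trans supp_y supp_lt) Fy y_ge0.
by rewrite inner_comb w_circ // mulr0 addr0.
Qed.

Lemma closed_walk_covering (l : seq (E * bool)) : strongly_connected tl hd D ->
  {subset l <= D} ->
  exists s, [/\ {subset s <= D}, {subset l <= s} & perm_eq (map otail s) (map ohead s)].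
Proof.
move=> scD; elim: l => [|o l IH] olD; first by exists [::].
have oD : o \in D by apply: olD; apply: mem_head.
have [s [sD ls s_bal]] := IH (fun a al => olD a (mem_behead (s := o :: l) al)).
have adj_o : adjS tl hd (nonbridge tl hd) (ohead o) (otail o).
  apply/existsP; exists o.1; rewrite /nonbridge (inD_nonbridge oD) /=.
  by case: o {olD oD} => e [] /=; rewrite !eqxx ?orbT.
have [t [tD ot t_bal]] := closed_walk_through oD (scD _ _ (connect1 adj_o)).
exists (t ++ s); split.
- by move=> a; rewrite mem_cat => /orP[/tD | /sD].
- by move=> a; rewrite inE mem_cat => /predU1P[-> | /ls ->]; rewrite ?ot ?orbT.
- by rewrite !map_cat perm_cat.
Qed.

Lemma positive_flow : strongly_connected tl hd D ->
  exists g : E -> R, is_flow g /\ {in D, forall o, 1 <= ochain g o}.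
Proof.
move=> scD; have enumD : {subset enum D <= D} by move=> o; rewrite mem_enum.
have [s [sD Ds s_bal]] := closed_walk_covering scD enumD.
exists (walk_chain s); split=> [|o oD]; first exact: walk_chain_flow.
rewrite ochain_walk_chain // ler1n -has_count has_pred1.
by apply: Ds; rewrite mem_enum.
Qed.

Lemma orthogonal_circuits_flow (w x : E -> R) : strongly_connected tl hd D ->
  (forall c, is_circuit tl hd c -> {subset c <= D} -> inner w (circ_chain R c) = 0) ->
  is_flow x -> inner w x = 0.
Proof.
move=> scD w_circ Fx; have [g [Fg g_ge1]] := positive_flow scD.
have g_ge0 : {in D, forall o, 0 <= ochain g o} by move=> o /g_ge1; apply: le_trans.
pose t := \sum_e `|x e|.
have wg0 := orthogonal_circuits_nonneg_flow w_circ Fg g_ge0.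
have Fy := is_flow_comb t Fx Fg.
suff : inner w (fun e => x e + t * g e) = 0 by rewrite inner_comb wg0 mulr0 addr0.
apply: orthogonal_circuits_nonneg_flow Fy _ => // o oD.
have xo_le_t : - ochain x o <= t.
  apply: le_trans (_ : `|x o.1| <= t).
    by rewrite /ochain; case: o.2; rewrite ?opprK ?ler_norm // -normrN ler_norm.
  by rewrite /t (bigD1 o.1) //= lerDl sumr_ge0.
have t_le : t <= t * ochain g o by rewrite ler_peMr ?g_ge1 ?sumr_ge0.
rewrite ochain_comb -[ochain x o]opprK addrC subr_ge0.
exact: le_trans xo_le_t t_le.
Qed.

End Flows.

Theorem mainTheorem20 (R : realFieldType) (V E : finType) (tl hd : E -> V)
  (D : {set E * bool}) (v : E -> R) :
  connected_graph tl hd ->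
  orientation_of_Gcirc tl hd D ->
  strongly_connected tl hd D ->
  is_flow tl hd v ->
  (forall c : seq (E * bool), is_circuit tl hd c -> {subset c <= D} ->
     2 * inner v (circ_chain R c) = qf (circ_chain R c)) ->
  2 * qf v = \sum_(o in D) ochain v o.
Proof.
move=> _ orientD scD Fv v_circ.
pose w e := 2 * v e - orient_chain R D e.
have w_circ c : is_circuit tl hd c -> {subset c <= D} -> inner w (circ_chain R c) = 0.
  move=> c_circ cD.
  by rewrite innerZBl v_circ // (inner_orient_circ_chain _ orientD) // subrr.
have := orthogonal_circuits_flow orientD scD w_circ Fv.
by rewrite innerZBl sum_ochain_inD => /eqP; rewrite subr_eq0 => /eqP.
Qed.
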